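(* Let $a\ge6$ and $n\ge1$ be integers and let $P_{0,n}$, $P_{l,n}$ be as in the context. Then for every $l\in\{1,\dots,a\}$, $$2d_n^{a-l}P_{l,n}(z)\in\mathbb{Z}[z]\qquad\text{and}\qquad 2d_n^{a+2}P_{0,n}(z)\in\mathbb{Z}[z],$$ where $d_n=\mathrm{lcm}(1,2,\dots,n)$.
   Context: Fix an integer $a\ge 6$. For complex $x$ and integer $m\ge0$, $(x)_m=x(x+1)\cdots(x+m-1)$. For an integer $n\ge1$ define $$R_n(t)=n!^{a-6}\left(t+\frac n2\right)\frac{(t-n)_n^3\,(t+n+1)_n^3}{(t)_{n+1}^a}.$$ Let $D_\lambda=\frac1{\lambda!}\left(\frac{d}{dt}\right)^\lambda$ and, for $l\in\{1,\dots,a\}$, $j\in\{0,\dots,n\}$, put $c_{l,j,n}=D_{a-l}\big(R_n(t)(t+j)^a\big)\big|_{t=-j}$. Define $$P_{0,n}(z)=-\sum_{l=1}^a\sum_{j=1}^n\sum_{k=1}^{j}\frac{l(l+1)\,c_{l,j,n}}{2k^{l+2}}z^{j-k},\qquad P_{l,n}(z)=\sum_{j=0}^n c_{l,j,n}z^j\quad(1\le l\le a).$$ *)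

From HB Require Import structures.
From mathcomp Require Import all_boot all_order all_algebra.
From mathcomp Require Import all_classical all_reals all_analysis.
Set Implicit Arguments. Unset Strict Implicit. Unset Printing Implicit Defensive.
Import Order.TTheory GRing.Theory Num.Theory.
Local Open Scope ring_scope.

Section Defs.
Variable R : realType.

Definition poch (x : R) (m : nat) : R := \prod_(i < m) (x + i%:R).

Definition Rn (a n : nat) (t : R) : R :=
  (n`!%:R) ^+ (a - 6) * (t + n%:R / 2) * (poch (t - n%:R) n) ^+ 3
  * (poch (t + n%:R + 1) n) ^+ 3 / (poch t n.+1) ^+ a.

(* The rational function R_n(t) (t+j)^a, with the factor (t+j)^a cancelled
   against the factor (t+j)^a of (t)_(n+1)^a (j in 0..n); this is a function
   regular near t = -j, equal to R_n(t)(t+j)^a for t not in {0,-1,...,-n}. *)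
Definition Rnj (a n j : nat) (t : R) : R :=
  (n`!%:R) ^+ (a - 6) * (t + n%:R / 2) * (poch (t - n%:R) n) ^+ 3
  * (poch (t + n%:R + 1) n) ^+ 3
  / \prod_(k < n.+1 | k != j :> nat) (t + k%:R) ^+ a.

Definition Dl (lam : nat) (f : R -> R) (x : R) : R :=
  derive1n lam f x / (lam`!)%:R.

Definition cc (a l j n : nat) : R := Dl (a - l) (Rnj a n j) (- j%:R).

Definition Pl (a l n : nat) : {poly R} :=
  \sum_(j < n.+1) cc a l j n *: 'X^j.

Definition P0 (a n : nat) : {poly R} :=
  - \sum_(1 <= l < a.+1) \sum_(1 <= j < n.+1) \sum_(1 <= k < j.+1)
      (((l * l.+1)%:R * cc a l j n) / (2 * k%:R ^+ (l + 2))) *: 'X^(j - k).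

End Defs.

Definition dn (n : nat) : nat := \big[lcmn/1%N]_(1 <= i < n.+1) i.

(* Let H_P(t) = P(t) / prod_(k <= n, k <> j) (t + k).  Cancelling the pole at -j,
   R_n(t) (t + j)^a = (t + n/2) H_P1(t)^3 H_P2(t)^3 H_P3(t)^(a-6) with P1 = (t-n)_n,
   P2 = (t+n+1)_n and P3 = n!; each P_i has degree <= n and P_i(-k)/n! is an integer.
   Lagrange interpolation at 0, -1, ..., -n then gives H_P(t) = sum_i A_i (t+j)/(t+i)
   with integral A_i, and the m-th Taylor coefficient of (t+j)/(t+i) at -j is
   +-(i-j)^(-m), which becomes integral after multiplication by d_n^m.  Call f
   d-integral of weight w at x0 when w d^m D_m f(x0) is an integer for every m: by the
   Leibniz rule this is stable under products (weights multiply), and t + n/2 has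
   weight 2 at -j.  Hence 2 d_n^(a-l) c_(l,j,n) is an integer, and the bound for P_0
   follows because d_n/k and l(l+1)/2 are integers. *)

From HB Require Import structures.
From mathcomp Require Import all_boot all_order all_algebra.
From mathcomp Require Import all_classical all_reals all_analysis.
From mathcomp Require Import ring zify.
Import Order.TTheory GRing.Theory Num.Theory.
Import numFieldNormedType.Exports.
Local Open Scope ring_scope.

Set Implicit Arguments. Unset Strict Implicit. Unset Printing Implicit Defensive.

Lemma natr_fact_neq0 (R : numDomainType) m : m`!%:R != 0 :> R.
Proof. by rewrite pnatr_eq0 -lt0n fact_gt0. Qed.

Lemma pascal_sum (R : pzSemiRingType) (u v : nat -> R) m :
  \sum_(i < m.+1) 'C(m, i)%:R * (u i * v (m.+1 - i)%N + u i.+1 * v (m - i)%N) =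
  \sum_(i < m.+2) 'C(m.+1, i)%:R * (u i * v (m.+1 - i)%N).
Proof.
rewrite [RHS]big_ord_recl /= bin0 subn0.
under [X in _ = _ + X]eq_bigr do rewrite binS natrD mulrDl subSS.
under eq_bigr do rewrite mulrDr.
rewrite !big_split /= addrA; congr (_ + _).
rewrite big_ord_recl big_ord_recr /= bin0 subn0 bin_small // mul0r addr0.
by congr (_ + _); apply: eq_bigr => i _; rewrite subSS.
Qed.


Section SmoothOn.
Variables (R : realType) (U : set R).
Hypothesis oU : open U.
Implicit Types (f g : R -> R) (b c t : R).

Definition smooth_on f := forall m t, U t -> derivable (derive1n m f) t 1.

Let near_U t : U t -> \forall s \near t, U s.
Proof. by move=> Ut; apply: open_nbhs_nbhs. Qed.

Lemma derive1n_eq_on f g : (forall t, U t -> f t = g t) ->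
  forall m t, U t -> derive1n m f t = derive1n m g t.
Proof.
move=> fg m; elim: m => [|m IHm] t Ut; first by rewrite !derive1n0 fg.
rewrite !derive1nS !derive1E; apply: near_eq_derive.
by near=> s; apply: IHm; near: s; exact: near_U.
Unshelve. all: by end_near. Qed.

Lemma smooth_on_eq f g : (forall t, U t -> f t = g t) ->
  smooth_on f -> smooth_on g.
Proof.
move=> fg sf m t Ut; apply: (near_eq_derivable _ (sf m t Ut)).
by near=> s; apply: (derive1n_eq_on fg); near: s; exact: near_U.
Unshelve. all: by end_near. Qed.

Lemma derive1n_cst c m : derive1n m.+1 (fun=> c) = fun=> 0.
Proof.
elim: m => [|m IHm]; last by rewrite derive1nS IHm; apply/funext => t; exact: derive1_cst.
by rewrite derive1n1; apply/funext => t; exact: derive1_cst.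
Qed.

Lemma smooth_on_cst c : smooth_on (fun=> c).
Proof. by case=> [|m] t _; rewrite ?derive1n_cst; exact: derivable_cst. Qed.

Lemma derive1nSr f m : derive1n m.+1 f = derive1n m (derive1 f).
Proof. exact: iterSr. Qed.

Lemma derive1_shift c : derive1 (fun t => t + c) = fun=> 1.
Proof.
apply/funext => t; rewrite derive1E.
by have /(congr1 (fun h => h t)) := derive_shift (1 : R) c.
Qed.

Lemma smooth_on_shift c : smooth_on (fun t => t + c).
Proof.
move=> [|[|m]] t _; rewrite ?derive1n0 ?derive1n1 ?derive1_shift.
- by apply: derivableD; [exact: derivable_id | exact: derivable_cst].
- exact: derivable_cst.
- by rewrite derive1nSr derive1_shift derive1n_cst; exact: derivable_cst.
Qed.

Lemma derive1nD f g : smooth_on f -> smooth_on g -> forall m t, U t ->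
  derive1n m (fun s => f s + g s) t = derive1n m f t + derive1n m g t.
Proof.
move=> sf sg m; elim: m => [|m IHm] t Ut; first by rewrite !derive1n0.
rewrite !derive1nS !derive1E.
rewrite (@near_eq_derive _ _ _ _ (derive1n m f + derive1n m g)); last first.
  by near=> s; apply: IHm; near: s; exact: near_U.
by rewrite deriveD //; [exact: sf | exact: sg].
Unshelve. all: by end_near. Qed.

Lemma smooth_onD f g : smooth_on f -> smooth_on g -> smooth_on (fun s => f s + g s).
Proof.
move=> sf sg m t Ut.
apply: (@near_eq_derivable _ _ _ (derive1n m f + derive1n m g)).
  by near=> s; rewrite [RHS]derive1nD //; near: s; exact: near_U.
by apply: derivableD; [exact: sf | exact: sg].
Unshelve. all: by end_near. Qed.

Lemma smooth_on_sum (I : Type) (r : seq I) (F : I -> R -> R) :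
  (forall i, smooth_on (F i)) -> smooth_on (fun s => \sum_(i <- r) F i s).
Proof.
move=> sF; elim: r => [|i r IHr].
  by under eq_fun do rewrite big_nil; exact: smooth_on_cst.
by under eq_fun do rewrite big_cons; exact: smooth_onD.
Qed.

Lemma derive1nM f g : smooth_on f -> smooth_on g -> forall m t, U t ->
  derive1n m (fun s => f s * g s) t =
  \sum_(i < m.+1) 'C(m, i)%:R * (derive1n i f t * derive1n (m - i) g t).
Proof.
move=> sf sg m; elim: m => [|m IHm] t Ut.
  by rewrite big_ord1 !derive1n0 bin0 mul1r.
rewrite derive1nS derive1E (@near_eq_derive _ _ _ _
  (\sum_(i < m.+1) ('C(m, i)%:R \*o (derive1n i f * derive1n (m - i) g)))); last first.
  by near=> s; rewrite IHm ?fct_sumE //; near: s; exact: near_U.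
rewrite derive_sum; last first.
  move=> i; apply: derivableM; first exact: derivable_cst.
  by apply: derivableM; [exact: sf | exact: sg].
rewrite -(pascal_sum (fun i => derive1n i f t) (fun i => derive1n i g t)).
apply: eq_bigr => i _.
rewrite deriveMl; last by apply: derivableM; [exact: sf | exact: sg].
rewrite deriveM; [|exact: sf | exact: sg].
rewrite -!derive1E -!derive1nS -subSn -1?ltnS //.
by congr (_ * (_ + _)); exact: mulrC.
Unshelve. all: by end_near. Qed.

Lemma smooth_onM f g : smooth_on f -> smooth_on g -> smooth_on (fun s => f s * g s).
Proof.
move=> sf sg m t Ut; apply: (@near_eq_derivable _ _ _
  (\sum_(i < m.+1) ('C(m, i)%:R \*o (derive1n i f * derive1n (m - i) g)))).
  by near=> s; rewrite derive1nM ?fct_sumE //; near: s; exact: near_U.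
apply: derivable_sum => i; apply: derivableM; first exact: derivable_cst.
by apply: derivableM; [exact: sf | exact: sg].
Unshelve. all: by end_near. Qed.

Lemma smooth_onX f k : smooth_on f -> smooth_on (fun s => f s ^+ k).
Proof.
move=> sf; elim: k => [|k IHk]; first exact: smooth_on_cst.
by under eq_fun do rewrite exprS; exact: smooth_onM.
Qed.

Lemma DlM f g : smooth_on f -> smooth_on g -> forall m t, U t ->
  Dl m (fun s => f s * g s) t = \sum_(i < m.+1) Dl i f t * Dl (m - i) g t.
Proof.
move=> sf sg m t Ut; rewrite /Dl derive1nM // mulr_suml; apply: eq_bigr => i _.
have bin_neq0 : 'C(m, i)%:R != 0 :> R by rewrite pnatr_eq0 -lt0n bin_gt0 -ltnS.
rewrite -(bin_fact (ltn_ord i : (i <= m)%N)) !natrM.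
by field; rewrite bin_neq0 !natr_fact_neq0.
Qed.

Section Pole.
Variables b c : R.
Hypothesis U_c : forall t, U t -> t + c != 0.

Lemma derive1n_pole m t : U t -> derive1n m (fun s => b / (s + c)) t =
  b * (-1) ^+ m * m`!%:R * (t + c)^-1 ^+ m.+1.
Proof.
elim: m t => [|m IHm] t Ut; first by rewrite derive1n0 expr0 !mulr1 expr1.
rewrite derive1nS derive1E (@near_eq_derive _ _ _ _
  ((b * (-1) ^+ m * m`!%:R) \*o (fun s => (s + c)^-1) ^+ m.+1)); last first.
  by near=> s; rewrite IHm ?exprfctE //; near: s; exact: near_U.
have d_inv : derivable (fun s => (s + c)^-1) t 1.
  apply: derivableV; first exact: U_c.
  by apply: derivableD; [exact: derivable_id | exact: derivable_cst].
rewrite deriveMl; last exact: derivableX.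
rewrite deriveX // deriveV ?U_c // -derive1E derive1_shift scalerA [_ *: 1]mulr1.
by rewrite factS natrM /= -exprVn !exprS; ring.
Unshelve. all: by end_near. Qed.

Lemma smooth_on_pole : smooth_on (fun s => b / (s + c)).
Proof.
move=> m t Ut; apply: (@near_eq_derivable _ _ _
  ((b * (-1) ^+ m * m`!%:R) \*o (fun s => (s + c)^-1) ^+ m.+1)).
  by near=> s; rewrite derive1n_pole ?exprfctE //; near: s; exact: near_U.
apply: derivableM; first exact: derivable_cst.
apply: derivableX; apply: derivableV; first exact: U_c.
by apply: derivableD; [exact: derivable_id | exact: derivable_cst].
Unshelve. all: by end_near. Qed.

Lemma Dl_pole m t : U t -> Dl m (fun s => b / (s + c)) t =
  b * (-1) ^+ m * (t + c)^-1 ^+ m.+1.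
Proof.
by move=> Ut; rewrite /Dl derive1n_pole // mulrAC mulfK ?natr_fact_neq0.
Qed.

End Pole.

End SmoothOn.

Definition int_taylor (R : realType) (x0 : R) (d : nat) (w : R) (f : R -> R) :=
  forall m, w * d%:R ^+ m * Dl m f x0 \is a Num.int.

Section IntTaylor.
Variables (R : realType) (U : set R) (x0 : R) (d : nat).
Hypotheses (oU : open U) (U_x0 : U x0).
Implicit Types (f g : R -> R) (b c w : R).
Local Notation int_taylor := (int_taylor x0 d).

Lemma int_taylor_eq_on f g w : (forall t, U t -> f t = g t) ->
  int_taylor w f -> int_taylor w g.
Proof. by move=> fg If m; rewrite /Dl -(derive1n_eq_on oU fg). Qed.

Lemma int_taylor_cst w c : w * c \is a Num.int -> int_taylor w (fun=> c).
Proof.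
move=> wc [|m]; first by rewrite /Dl derive1n0 expr0 mulr1 divr1.
by rewrite /Dl derive1n_cst mul0r mulr0 rpred0.
Qed.

Lemma int_taylor_shift c : 2 * (x0 + c) \is a Num.int -> int_taylor 2 (fun s => s + c).
Proof.
move=> h [|[|m]]; rewrite /Dl.
- by rewrite derive1n0 expr0 mulr1 divr1.
- by rewrite derive1n1 derive1_shift expr1 divr1 mulr1 rpredM ?natr_int.
- by rewrite derive1nSr derive1_shift derive1n_cst mul0r mulr0 rpred0.
Qed.

Lemma int_taylor_pole b c : (forall t, U t -> t + c != 0) ->
  b / (x0 + c) \is a Num.int -> d%:R / (x0 + c) \is a Num.int ->
  int_taylor 1 (fun s => b / (s + c)).
Proof.
move=> U_c bc dc m; rewrite mul1r (Dl_pole oU b U_c) // exprSr.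
have -> : d%:R ^+ m * (b * (-1) ^+ m * ((x0 + c)^-1 ^+ m * (x0 + c)^-1)) =
  b / (x0 + c) * (-1) ^+ m * (d%:R / (x0 + c)) ^+ m by rewrite exprMn; ring.
apply: rpredM; last exact: rpredX.
by apply: rpredM => //; rewrite rpredX ?rpredN ?rpred1.
Qed.

Lemma int_taylorD w f g : smooth_on U f -> smooth_on U g ->
  int_taylor w f -> int_taylor w g -> int_taylor w (fun s => f s + g s).
Proof.
move=> sf sg If Ig m; rewrite /Dl (derive1nD oU sf sg) // mulrDl mulrDr.
exact: rpredD (If m) (Ig m).
Qed.

Lemma int_taylor_sum (I : Type) (r : seq I) w (F : I -> R -> R) :
  (forall i, smooth_on U (F i)) -> (forall i, int_taylor w (F i)) ->
  int_taylor w (fun s => \sum_(i <- r) F i s).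
Proof.
move=> sF IF; elim: r => [|i r IHr].
  by under eq_fun do rewrite big_nil; apply: int_taylor_cst; rewrite mulr0.
under eq_fun do rewrite big_cons.
by apply: int_taylorD => //; exact: smooth_on_sum.
Qed.

Lemma int_taylorM w1 w2 f g : smooth_on U f -> smooth_on U g ->
  int_taylor w1 f -> int_taylor w2 g -> int_taylor (w1 * w2) (fun s => f s * g s).
Proof.
move=> sf sg If Ig m; rewrite (DlM oU sf sg) // !mulr_sumr; apply: rpred_sum => i _.
have -> : d%:R ^+ m = d%:R ^+ i * d%:R ^+ (m - i) :> R by rewrite -exprD subnKC // -ltnS.
have -> : w1 * w2 * (d%:R ^+ i * d%:R ^+ (m - i)) * (Dl i f x0 * Dl (m - i) g x0) =
  (w1 * d%:R ^+ i * Dl i f x0) * (w2 * d%:R ^+ (m - i) * Dl (m - i) g x0) by ring.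
exact: rpredM.
Qed.

Lemma int_taylorX w f k : smooth_on U f -> int_taylor w f ->
  int_taylor (w ^+ k) (fun s => f s ^+ k).
Proof.
move=> sf If; elim: k => [|k IHk].
  by under eq_fun do rewrite expr0; apply: int_taylor_cst; rewrite mulr1 rpred1.
under eq_fun do rewrite exprS.
by rewrite exprS; apply: int_taylorM => //; exact: smooth_onX.
Qed.

End IntTaylor.

Section Pochhammer.
Variable R : realType.
Implicit Types (x : R) (m n : nat).

Lemma poch_natS m n : poch m.+1%:R n = ((m + n) ^_ n)%:R :> R.
Proof.
rewrite /poch ffact_prod natr_prod (reindex_inj rev_ord_inj); apply: eq_bigr => k _.
by rewrite /= -natrD; congr _%:R; have := ltn_ord k; lia.
Qed.

Lemma poch_opp x n : poch (- x) n = (-1) ^+ n * poch (x - n%:R + 1) n.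
Proof.
rewrite /poch (reindex_inj rev_ord_inj).
rewrite (eq_bigr (fun k : 'I_n => - (x - n%:R + 1 + k%:R))) ?prodrN ?card_ord // => k _. rewrite /= natrB; last by have := ltn_ord k; lia.
by rewrite -natr1; ring.
Qed.

Lemma poch_opp_eq0 m n : (m < n)%N -> poch (- m%:R) n = 0 :> R.
Proof. by move=> mn; rewrite /poch (bigD1 (Ordinal mn)) //= addNr mul0r. Qed.

Lemma poch_int_div_fact x n : x \is a Num.int -> poch x n / n`!%:R \is a Num.int.
Proof.
have natS m : poch (m.+1%:R : R) n / n`!%:R \is a Num.int.
  by rewrite poch_natS -bin_ffact natrM mulfK ?natr_int ?natr_fact_neq0.
have opp m : poch (- m%:R : R) n / n`!%:R \is a Num.int.
  have [mn | nm] := ltnP m n; first by rewrite poch_opp_eq0 // mul0r rpred0.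
  rewrite poch_opp -natrB // natr1 -mulrA rpredM ?natS //.
  by rewrite rpredX ?rpredN ?rpred1.
case/intrP => [[[|m] | m]] ->.
- by have := opp 0%N; rewrite oppr0.
- exact: natS.
- by rewrite NegzE mulrNz; exact: opp.
Qed.

End Pochhammer.

Lemma prod_skip_sub (R : realType) (i n : nat) : (i <= n)%N ->
  \prod_(k < n.+1 | k != i :> nat) (k%:R - i%:R : R) = (-1) ^+ i * (i`! * (n - i)`!)%:R.
Proof.
elim: n => [|n IHn]; first by rewrite leqn0 => /eqP->; rewrite big_mkcond big_ord1 /= mul1r.
rewrite leq_eqVlt ltnS => /predU1P[-> | le_in].
  rewrite subnn muln1 big_mkcond big_ord_recr /= eqxx mulr1 -big_mkcond /=.
  have -> : \prod_(k < n.+1 | k != n.+1 :> nat) (k%:R - n.+1%:R) = poch (- n.+1%:R : R) n.+1.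
    by apply: eq_big => [k | k _]; [rewrite neq_ltn ltn_ord | rewrite addrC].
  by rewrite poch_opp subrr add0r (poch_natS R 0) add0n ffactnn.
rewrite big_mkcond big_ord_recr /= -big_mkcond IHn // (gtn_eqF (le_in : (i < n.+1)%N)) /=.
by rewrite subSn // factS !natrM -(natrB _ (leqW le_in)) subSn //; ring.
Qed.

Section PartialFractions.
Variables (R : realType) (n j : nat).
Hypothesis j_le_n : (j <= n)%N.

Definition poch_skip (t : R) := \prod_(k < n.+1 | k != j :> nat) (t + k%:R).

Definition U_j : set R := ball (- j%:R : R) 1.

Lemma open_U_j : open U_j. Proof. exact: ball_open. Qed.

Lemma U_j_center : U_j (- j%:R). Proof. exact: ballxx. Qed.

Lemma U_j_addn_neq0 t (k : nat) : U_j t -> k != j -> t + k%:R != 0.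
Proof.
rewrite /U_j -ball_normE /= => Ut; apply: contraNneq => /eqP; rewrite addr_eq0 => /eqP tE.
move: Ut; rewrite tE opprK addrC; case: (ltngtP k j) => [kj | jk | -> //] Ut.
  by move: Ut; rewrite -opprB normrN -natrB 1?ltnW // normr_nat ltrn1; lia.
by move: Ut; rewrite -natrB 1?ltnW // normr_nat ltrn1; lia.
Qed.

Lemma poch_skip_neq0 t : U_j t -> poch_skip t != 0.
Proof. by move=> Ut; apply/prodf_neq0 => k; exact: U_j_addn_neq0. Qed.

(* (t + j)/(t + i), written so that it is the constant 1 when i = j *)
Definition pf_term (i : nat) (t : R) := 1 + (j%:R - i%:R) / (t + i%:R).

Lemma pf_term_id : pf_term j = fun=> 1.
Proof. by apply/funext => t; rewrite /pf_term subrr mul0r addr0. Qed.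

Lemma prod_skip_pf_term (i : nat) t : (i <= n)%N -> U_j t ->
  \prod_(k < n.+1 | k != i :> nat) (t + k%:R) / poch_skip t = pf_term i t.
Proof.
move=> le_in Ut; have [-> | ij] := eqVneq i j; first by rewrite pf_term_id divff ?poch_skip_neq0.
have full_prod (l : nat) : (l <= n)%N -> \prod_(k < n.+1) (t + k%:R) =
    (t + l%:R) * \prod_(k < n.+1 | k != l :> nat) (t + k%:R).
  by move=> le_ln; rewrite (bigD1 (Ordinal (le_ln : (l < n.+1)%N))).
have := full_prod j j_le_n; rewrite (full_prod i le_in) -/(poch_skip t) => E.
have ti := U_j_addn_neq0 Ut ij; have tj := poch_skip_neq0 Ut.
apply: (mulIf ti); rewrite mulrAC [_ * (t + _)]mulrC E /pf_term; field.
by rewrite ti tj.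
Qed.

Lemma smooth_pf_term i : smooth_on U_j (pf_term i).
Proof.
have [-> | ij] := eqVneq i j; first by rewrite pf_term_id; exact: smooth_on_cst.
apply: smooth_onD; [exact: open_U_j | exact: smooth_on_cst |].
by apply: smooth_on_pole => [|t Ut]; [exact: open_U_j | exact: U_j_addn_neq0].
Qed.

Section Interpolation.
Variable P : {poly R}.
Hypotheses (size_P : (size P <= n.+1)%N)
  (P_int : forall i, (i <= n)%N -> P.[- i%:R] / n`!%:R \is a Num.int).

Definition lagrange_coef (i : nat) :=
  P.[- i%:R] / \prod_(k < n.+1 | k != i :> nat) (k%:R - i%:R).

Lemma lagrange_coef_int i : (i <= n)%N -> lagrange_coef i \is a Num.int.
Proof.
move=> le_in; rewrite /lagrange_coef prod_skip_sub //.
have -> : P.[- i%:R] / ((-1) ^+ i * (i`! * (n - i)`!)%:R) =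
    P.[- i%:R] / n`!%:R * ((-1) ^+ i * 'C(n, i)%:R).
  rewrite -(bin_fact le_in) !natrM invfM -exprVn invrN1; field.
  by rewrite !natr_fact_neq0 pnatr_eq0 -lt0n bin_gt0 le_in.
by rewrite rpredM ?P_int // rpredM ?rpredX ?rpredN ?rpred1 ?natr_int.
Qed.

Lemma horner_lagrange t :
  P.[t] = \sum_(i < n.+1) lagrange_coef i * \prod_(k < n.+1 | k != i :> nat) (t + k%:R).
Proof.
have x_inj : injective (fun k : nat => - k%:R : R).
  by move=> k l /oppr_inj /eqP; rewrite eqr_nat => /eqP.
rewrite {1}(lagrange_gen (ltn0Sn n) x_inj size_P) horner_sum; apply: eq_bigr => i _.
rewrite (lagrangeE (ltn0Sn n) x_inj) /= !hornerM !hornerC !horner_prod mulrA /lagrange_coef.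
by congr (_ / _ * _); apply: eq_big => // k _; rewrite hornerXsubC opprK // addrC.
Qed.

Definition pf_quot t := P.[t] / poch_skip t.

Lemma pf_quot_expansion t : U_j t ->
  pf_quot t = \sum_(i < n.+1) lagrange_coef i * pf_term i t.
Proof.
move=> Ut; rewrite /pf_quot horner_lagrange mulr_suml; apply: eq_bigr => i _.
by rewrite -mulrA prod_skip_pf_term // -ltnS.
Qed.

Lemma smooth_pf_quot : smooth_on U_j pf_quot.
Proof.
have oU := open_U_j; apply: (smooth_on_eq oU (fun t Ut => esym (pf_quot_expansion Ut))).
by apply: smooth_on_sum => // i; apply: smooth_onM => //; [exact: smooth_on_cst | exact: smooth_pf_term].
Qed.

Section Integrality.
Variable d : nat.
Hypothesis dvd_d : forall k, (0 < k <= n)%N -> (k %| d)%N.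

Lemma div_dist_int i : (i <= n)%N -> d%:R / (- j%:R + i%:R : R) \is a Num.int.
Proof.
move=> le_in; rewrite addrC; have [ij | ji | ->] := ltngtP i j; last by rewrite subrr invr0 mulr0.
  rewrite -opprB -natrB 1?ltnW // invrN mulrN rpredN -natf_div ?natr_int //.
  by apply: dvd_d; lia.
rewrite -natrB 1?ltnW // -natf_div ?natr_int //.
by apply: dvd_d; lia.
Qed.

Lemma int_taylor_pf_term i : (i <= n)%N -> int_taylor (- j%:R) d 1 (pf_term i).
Proof.
move=> le_in; have [-> | ij] := eqVneq i j.
  by rewrite pf_term_id; apply: int_taylor_cst; rewrite mulr1 rpred1.
have U_i t : U_j t -> t + i%:R != 0 by move=> Ut; exact: U_j_addn_neq0.
have [oU Uj] := (open_U_j, U_j_center).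
rewrite /pf_term; apply: (int_taylorD oU Uj (smooth_on_cst (c := 1)) (smooth_on_pole oU U_i)).
  by apply: int_taylor_cst; rewrite mulr1 rpred1.
apply: (int_taylor_pole oU Uj U_i _ (div_dist_int le_in)).
have ij0 : i%:R - j%:R != 0 :> R by rewrite subr_eq0 eqr_nat.
by rewrite [_ + i%:R]addrC -[j%:R - _]opprB mulNr divff // rpredN rpred1.
Qed.

Lemma int_taylor_pf_quot : int_taylor (- j%:R) d 1 pf_quot.
Proof.
have [oU Uj] := (open_U_j, U_j_center).
apply: (int_taylor_eq_on oU Uj (fun t Ut => esym (pf_quot_expansion Ut))).
apply: (int_taylor_sum oU Uj) => i.
  by apply: smooth_onM => //; [exact: smooth_on_cst | exact: smooth_pf_term].
have i_le_n : (i <= n)%N by rewrite -ltnS.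
have coef_int : int_taylor (- j%:R) d 1 (fun=> lagrange_coef i).
  by apply: int_taylor_cst; rewrite mul1r lagrange_coef_int.
have := int_taylorM oU Uj (smooth_on_cst (c := _)) (smooth_pf_term (i := i)) coef_int
  (int_taylor_pf_term i_le_n).
by rewrite mulr1.
Qed.

End Integrality.

End Interpolation.

End PartialFractions.

Section PochhammerPoly.
Variable R : realType.

Definition pochp (c : R) (m : nat) : {poly R} := \prod_(k < m) ('X - (- (c + k%:R))%:P).

Lemma horner_pochp c m t : (pochp c m).[t] = poch (t + c) m.
Proof. by rewrite horner_prod; apply: eq_bigr => k _; rewrite hornerXsubC opprK addrA. Qed.

Lemma size_pochp c m : size (pochp c m) = m.+1.
Proof. by rewrite size_prod_XsubC /index_enum -enumT size_enum_ord. Qed.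

Lemma pochp_int c m i : c \is a Num.int ->
  (pochp c m).[- i%:R] / m`!%:R \is a Num.int.
Proof. by move=> c_int; rewrite horner_pochp poch_int_div_fact ?rpredD ?rpredN ?natr_int. Qed.

End PochhammerPoly.

Lemma dvdn_dn k n : (0 < k <= n)%N -> (k %| dn n)%N.
Proof.
case/andP=> k0 kn; rewrite /dn (@big_cat_nat _ _ _ k) ?leqW // (@big_ltn _ _ _ k) ?ltnS //=.
by apply: dvdn_trans (dvdn_lcmr _ _); exact: dvdn_lcml.
Qed.

Section Coefficients.
Variables (R : realType) (a n j : nat).
Hypotheses (a_ge6 : (6 <= a)%N) (j_le_n : (j <= n)%N).

Lemma Rnj_factor : Rnj a n j = fun t : R => (t + n%:R / 2) *
  (pf_quot n j (pochp (- n%:R : R) n) t ^+ 3 * (pf_quot n j (pochp (n%:R + 1 : R) n) t ^+ 3 *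
   pf_quot n j (n`!%:R)%:P t ^+ (a - 6))).
Proof.
apply/funext => t; rewrite /Rnj /pf_quot !horner_pochp hornerC addrA prodrXl -/(poch_skip n j t).
have -> : poch_skip n j t ^+ a = poch_skip n j t ^+ 3 *
    (poch_skip n j t ^+ 3 * poch_skip n j t ^+ (a - 6)) by rewrite -!exprD; congr (_ ^+ _); lia.
by rewrite !expr_div_n !invfM; ring.
Qed.

Lemma int_taylor_Rnj d : (forall k, (0 < k <= n)%N -> (k %| d)%N) ->
  int_taylor (- j%:R : R) d 2 (Rnj a n j).
Proof.
move=> dvd_d; have [oU Uj] := (@open_U_j R j, U_j_center R j).
have pf_ok (P : {poly R}) : (size P <= n.+1)%N ->
    (forall i, (i <= n)%N -> P.[- i%:R] / n`!%:R \is a Num.int) ->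
    smooth_on (U_j j) (pf_quot n j P) /\ int_taylor (- j%:R) d 1 (pf_quot n j P).
  by move=> sP P_int; split; [exact: smooth_pf_quot | exact: int_taylor_pf_quot].
have pochp_ok (c : R) : c \is a Num.int -> smooth_on (U_j j) (pf_quot n j (pochp c n)) /\
    int_taylor (- j%:R) d 1 (pf_quot n j (pochp c n)).
  by move=> c_int; apply: (pf_ok (pochp c n)) => [|i _]; [rewrite size_pochp | exact: pochp_int].
have n_int : (n%:R : R) \is a Num.int := natr_int _ n.
have [s1 i1] := pochp_ok (- n%:R) (rpredNr n_int).
have [s2 i2] := pochp_ok (n%:R + 1) (rpredD n_int (rpred1 _)).
have [s3 i3] : smooth_on (U_j j) (pf_quot n j (n`!%:R : R)%:P) /\
    int_taylor (- j%:R) d 1 (pf_quot n j (n`!%:R : R)%:P).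
  apply: pf_ok => [|i _]; first by rewrite size_polyC natr_fact_neq0.
  by rewrite hornerC divff ?natr_fact_neq0.
have half_int : 2 * (- j%:R + n%:R / 2 : R) \is a Num.int.
  have -> : 2 * (- j%:R + n%:R / 2) = n%:R - (2 * j)%:R :> R by rewrite natrM; field.
  by rewrite rpredB ?natr_int.
have s23 := smooth_onM oU (smooth_onX (k := 3%N) oU s2) (smooth_onX (k := (a - 6)%N) oU s3).
have i23 := int_taylorM oU Uj (smooth_onX (k := 3%N) oU s2) (smooth_onX (k := (a - 6)%N) oU s3)
  (int_taylorX oU Uj 3%N s2 i2) (int_taylorX oU Uj (a - 6)%N s3 i3).
have s123 := smooth_onM oU (smooth_onX (k := 3%N) oU s1) s23.
have i123 := int_taylorM oU Uj (smooth_onX (k := 3%N) oU s1) s23 (int_taylorX oU Uj 3%N s1 i1) i23.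
have := int_taylorM oU Uj (smooth_on_shift (c := n%:R / 2)) s123 (int_taylor_shift d half_int) i123.
by rewrite !expr1n !mulr1 -Rnj_factor.
Qed.

End Coefficients.

Lemma mul_succ_bin2 l : (l * l.+1 = 2 * 'C(l.+1, 2))%N.
Proof. by elim: l => // l IHl; rewrite binS bin1; lia. Qed.

Lemma P0_scalar_int (R : archiRealFieldType) (D c : R) (a l k : nat) :
  (l <= a)%N -> (0 < k)%N -> 2 * D ^+ (a - l) * c \is a Num.int ->
  D / k%:R \is a Num.int ->
  2 * D ^+ (a + 2) * ((l * l.+1)%:R * c / (2 * k%:R ^+ (l + 2))) \is a Num.int.
Proof.
move=> le_la k_gt0 c_int Dk; rewrite mul_succ_bin2 natrM.
have -> : D ^+ (a + 2) = D ^+ (a - l) * D ^+ (l + 2) by rewrite -exprD addnA subnK.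
have k_neq0 : k%:R != 0 :> R by rewrite pnatr_eq0 -lt0n.
have -> : 2 * (D ^+ (a - l) * D ^+ (l + 2)) * (2%:R * 'C(l.+1, 2)%:R * c / (2 * k%:R ^+ (l + 2)))
    = 2 * D ^+ (a - l) * c * 'C(l.+1, 2)%:R * (D / k%:R) ^+ (l + 2).
  by rewrite expr_div_n; field; rewrite expf_neq0.
by rewrite rpredM ?rpredX // rpredM ?natr_int.
Qed.

Lemma polyOver_sum (R : nzSemiRingType) (S : addrClosed R) (I : Type) (r : seq I)
    (P : pred I) (F : I -> {poly R}) :
  (forall i, P i -> F i \is a polyOver S) -> \sum_(i <- r | P i) F i \is a polyOver S.
Proof.
by move=> FS; apply/polyOverP => k; rewrite coef_sum rpred_sum // => i /FS /polyOverP.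
Qed.

Theorem mainTheorem3 (R : realType) (a n : nat) :
  (6 <= a)%N -> (1 <= n)%N ->
  (forall l : nat, (1 <= l <= a)%N ->
     (2 * (dn n)%:R ^+ (a - l)) *: Pl R a l n \is a polyOver Num.int) /\
  (2 * (dn n)%:R ^+ (a + 2)) *: P0 R a n \is a polyOver Num.int.
Proof.
move=> a_ge6 _.
have cc_int l j : (j <= n)%N -> 2 * (dn n)%:R ^+ (a - l) * cc R a l j n \is a Num.int.
  by move=> j_le_n; exact: (int_taylor_Rnj R a_ge6 j_le_n (fun k => @dvdn_dn k n) (a - l)%N).
split=> [l /andP[_ le_la] | ].
  rewrite /Pl scaler_sumr; apply: polyOver_sum => j _.
  by rewrite scalerA polyOverZ ?polyOverXn // cc_int // -ltnS.
rewrite /P0 scalerN -scaleNr scaler_sumr big_nat; apply: polyOver_sum => l /andP[_ le_la].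
rewrite scaler_sumr big_nat; apply: polyOver_sum => j /andP[_ le_jn].
rewrite scaler_sumr big_nat; apply: polyOver_sum => k /andP[k_gt0 le_kj].
rewrite scalerA polyOverZ ?polyOverXn // mulNr rpredN.
apply: P0_scalar_int => //; first by apply: cc_int; rewrite -ltnS.
by rewrite -natf_div ?natr_int // dvdn_dn //; lia.
Qed.
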